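(* Let $G$ and $H$ be connected graphs, each with at least $3$ vertices, let $\ell_1=\lambda_3(G)$, $\ell_2=\lambda_3(H)$, $n_2=|V(H)|$. Let $S=\{x,y,z\}$ be a set of three vertices of $G\circ H$ lying in three pairwise distinct $H$-layers. Then $G\circ H$ contains at least $\ell_2+\ell_1 n_2$ pairwise edge-disjoint $S$-trees.
   Context: For a graph $G$ and $S\subseteq V(G)$ with $|S|\ge 2$, an $S$-tree is a subgraph that is a tree containing all vertices of $S$; $\lambda(S)$ is the maximum number of pairwise edge-disjoint $S$-trees, and $\lambda_3(G)=\min\{\lambda(S): |S|=3\}$. The lexicographic product $G\circ H$ has vertex set $V(G)\times V(H)$, and $(u,v)$ is adjacent to $(u',v')$ iff either $uu'\in E(G)$, or $u=u'$ and $vv'\in E(H)$. For $u\in V(G)$, the $H$-layer $H(u)$ is the vertex set $\{(u,v): v\in V(H)\}$. *)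

From mathcomp Require Import all_boot.
Set Implicit Arguments. Unset Strict Implicit. Unset Printing Implicit Defensive.

Definition simple_graph (T : finType) (g : rel T) : Prop :=
  symmetric g /\ irreflexive g.

Definition connected_graph (T : finType) (g : rel T) : Prop :=
  forall u v : T, connect g u v.

(* Edges are represented as 2-element vertex sets {u,v}. *)
Definition is_edge (T : finType) (g : rel T) (f : {set T}) : bool :=
  [exists u, exists v, g u v && (f == [set u; v])].

Definition adjF (T : finType) (F : {set {set T}}) : rel T :=
  fun u v => (u != v) && ([set u; v] \in F).

Definition is_subgraph (T : finType) (g : rel T) (W : {set T}) (F : {set {set T}}) : Prop :=
  forall f, f \in F -> is_edge g f /\ f \subset W.

Definition acyclic (T : finType) (F : {set {set T}}) : Prop :=
  ~ exists c : seq T, [/\ uniq c, 2 < size c & cycle (adjF F) c].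

Definition is_tree (T : finType) (g : rel T) (W : {set T}) (F : {set {set T}}) : Prop :=
  [/\ is_subgraph g W F,
      W != set0,
      (forall u v, u \in W -> v \in W -> connect (adjF F) u v)
    & acyclic F].

Definition is_Stree (T : finType) (g : rel T) (S : {set T})
    (t : {set T} * {set {set T}}) : Prop :=
  is_tree g t.1 t.2 /\ S \subset t.1.

(* lambda(S) >= k : there are k pairwise edge-disjoint S-trees. *)
Definition has_trees (T : finType) (g : rel T) (S : {set T}) (k : nat) : Prop :=
  exists tr : 'I_k -> {set T} * {set {set T}},
    (forall i, is_Stree g S (tr i)) /\
    (forall i j, i != j -> [disjoint (tr i).2 & (tr j).2]).

(* l = lambda_3(g) = min_{|S|=3} lambda(S), where lambda(S) is the max k
   with has_trees g S k. *)
Definition is_lambda3 (T : finType) (g : rel T) (l : nat) : Prop :=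
  (forall S : {set T}, #|S| = 3 -> has_trees g S l) /\
  (exists S : {set T}, #|S| = 3 /\ ~ has_trees g S l.+1).

Definition lexprod (T1 T2 : finType) (g : rel T1) (h : rel T2) : rel (T1 * T2) :=
  fun a b => g a.1 b.1 || ((a.1 == b.1) && h a.2 b.2).

From mathcomp Require Import all_boot zify.
Set Implicit Arguments. Unset Strict Implicit. Unset Printing Implicit Defensive.

(* Choose three distinct vertices s1, s2, s3 of H covering the H-coordinates
   of x, y, z; take l1 edge-disjoint {x.1, y.1, z.1}-trees T_i of G and l2
   edge-disjoint {s1, s2, s3}-trees R_j of H.  We build l2 + l1 |V(H)|
   pairwise disjoint edge sets of G o H, each connecting x to y and z:
   - for every tree T_i and level w of H, the tree T_i lifted to level w,
     each of its edges becoming a path of length one or three that is rerouted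
     through the terminals in their layers (lifted_tree);
   - for every tree R_j, a copy of R_j in every H-layer, plus, for every edge
     ab of G, one edge between the copies in layers a and b, chosen among
     s1, s2, s3 so as to avoid all lifted edges (tree_family). *)

Lemma adjF_sym (T : finType) (F : {set {set T}}) : symmetric (adjF F).
Proof. by move=> u v; rewrite /adjF eq_sym setUC. Qed.

Lemma connect_adjF_sym (T : finType) (F : {set {set T}}) (u v : T) :
  connect (adjF F) u v = connect (adjF F) v u.
Proof. exact: (sym_connect_sym (@adjF_sym T F)). Qed.

Lemma is_edgeP (T : finType) (g : rel T) (f : {set T}) :
  is_edge g f -> exists a b, g a b /\ f = [set a; b].
Proof. by move=> /existsP [a /existsP [b /andP [gab /eqP ->]]]; exists a, b. Qed.

Lemma set2_pair (T : finType) (a b u v : T) :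
  u \in [set a; b] -> v \in [set a; b] -> u != v -> [set u; v] = [set a; b].
Proof.
by move=> /set2P [] -> /set2P [] -> //; rewrite ?eqxx // => _; exact: setUC.
Qed.

Lemma edge_neq (T : finType) (e : rel T) (u v : T) :
  irreflexive e -> is_edge e [set u; v] -> u != v.
Proof.
move=> irr /is_edgeP [a [b [eab E]]]; apply/eqP => uv; subst v.
have : a \in [set u; u] by rewrite E set21.
have : b \in [set u; u] by rewrite E set22.
by move=> /set2P [] ? /set2P [] ?; subst; rewrite irr in eab.
Qed.

Lemma edge_rel (T : finType) (e : rel T) (u v : T) :
  symmetric e -> irreflexive e -> is_edge e [set u; v] -> e u v.
Proof.
move=> sym irr ie; have nuv := edge_neq irr ie.
move: ie => /is_edgeP [a [b [eab E]]].
have : u \in [set a; b] by rewrite -E set21.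
have : v \in [set a; b] by rewrite -E set22.
move=> /set2P [] ? /set2P [] ?; subst; rewrite ?eqxx // in nuv.
by rewrite sym.
Qed.

Lemma connect_map (T T' : finType) (e : rel T) (e' : rel T') (f : T -> T') :
  (forall u v, e u v -> connect e' (f u) (f v)) ->
  forall u v, connect e u v -> connect e' (f u) (f v).
Proof.
move=> H u v /connectP [p hp ->]; elim: p u hp => [|d p IHp] u /=.
  by move=> _; exact: connect0.
by move=> /andP [hud hp]; apply: connect_trans (H _ _ hud) (IHp _ hp).
Qed.

Lemma disjoint_setsP (T : finType) (A B : {set T}) :
  (forall E, E \in A -> E \in B -> False) -> [disjoint A & B].
Proof.
move=> H; rewrite -setI_eq0; apply/eqP/setP => E; rewrite in_setI in_set0.
by apply/negP => /andP [h1 h2]; case: (H _ h1 h2).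
Qed.

Section SpanningTree.

(* A minimal spanning edge set, together with the vertices it
   reaches from r, is an S-tree: unreachable edges and edges on cycles could
   be deleted. *)

Variables (T : finType) (g : rel T) (S : {set T}) (r : T).

Definition spanning (F : {set {set T}}) : bool :=
  [forall f in F, is_edge g f] && [forall s in S, connect (adjF F) r s].

Lemma spanningP (F : {set {set T}}) :
  reflect ((forall f, f \in F -> is_edge g f) /\
           (forall s, s \in S -> connect (adjF F) r s))
          (spanning F).
Proof.
by apply: (iffP andP) => [] [/forall_inP E /forall_inP C] //; split;
  apply/forall_inP.
Qed.

Definition reach (F : {set {set T}}) : {set T} := [set v | connect (adjF F) r v].

Lemma connect_drop_unreached (F : {set {set T}}) (f : {set T}) (v : T) :
  (forall u, u \in f -> ~~ connect (adjF F) r u) ->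
  connect (adjF F) r v -> connect (adjF (F :\ f)) r v.
Proof.
move=> hu /connectP [p hp ->].
suff H c : connect (adjF F) r c -> path (adjF F) c p -> path (adjF (F :\ f)) c p.
  by apply/connectP; exists p => //; apply: H => //; exact: connect0.
elim: p {hp} c => //= d p IHp c hc /andP [hcd hp].
apply/andP; split; last by apply: IHp hp; apply: connect_trans hc (connect1 hcd).
move: hcd; rewrite /adjF => /andP [ne hin]; rewrite ne /= in_setD1 hin andbT.
apply/eqP => ef; have: c \in f by rewrite -ef set21.
by move/hu; rewrite hc.
Qed.

Lemma connect_drop_edge (F : {set {set T}}) (u v : T) :
  connect (adjF (F :\ [set u; v])) u v ->
  subrel (connect (adjF F)) (connect (adjF (F :\ [set u; v]))).
Proof.
move=> cuv; have cvu := cuv; rewrite connect_adjF_sym in cvu.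
apply: connect_sub => a b; rewrite {1}/adjF => /andP [ne hin].
case: (boolP ([set a; b] == [set u; v])) => [/eqP e|ne2]; last first.
  by apply: connect1; rewrite /adjF ne /= in_setD1 ne2 hin.
have : a \in [set u; v] by rewrite -e set21.
have : b \in [set u; v] by rewrite -e set22.
by move=> /set2P [] -> /set2P [] ->; rewrite ?connect0.
Qed.

Lemma cycle_bypass (F : {set {set T}}) (c0 c1 : T) (rest : seq T) :
  uniq [:: c0, c1 & rest] -> 0 < size rest ->
  cycle (adjF F) [:: c0, c1 & rest] ->
  connect (adjF (F :\ [set c0; c1])) c1 c0.
Proof.
move=> un srest; rewrite /cycle /= rcons_path => /andP [_ /andP [hp hl]].
move: un => /= /andP [+ /andP [c1rest _]]; rewrite inE negb_or => /andP [ne c0rest].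
have keep a b : adjF F a b -> c0 \notin [set a; b] -> adjF (F :\ [set c0; c1]) a b.
  rewrite /adjF => /andP [nab hin] nc0; rewrite nab /= in_setD1 hin andbT.
  by apply: contra nc0 => /eqP ->; rewrite set21.
apply/connectP; exists (rcons rest c0); last by rewrite last_rcons.
rewrite rcons_path; apply/andP; split.
  apply: (sub_in_path (P := predC1 c0) _ _ hp); last first.
    by rewrite /= eq_sym ne /=; apply/allP => w hw /=; apply: contraNneq c0rest => <-.
  move=> a b /= ha hb hab; apply: keep => //.
  by rewrite !inE negb_or !(eq_sym c0); apply/andP.
move: hl; rewrite /adjF => /andP [nl hin]; rewrite nl /= in_setD1 hin andbT.
apply/eqP => e; have : c1 \in [set last c1 rest; c0] by rewrite e set22.
case/set2P => [e1|e1]; last by rewrite e1 eqxx in ne.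
by case: rest srest e1 c1rest {hp nl hin e c0rest keep} => // a rest _ /= ->; rewrite mem_last.
Qed.

Section Minimal.

Variable F : {set {set T}}.
Hypothesis minF : minset spanning F.

Let spF : spanning F := minsetp minF.

Lemma minimal_no_drop (f : {set T}) : f \in F -> ~~ spanning (F :\ f).
Proof.
move=> fF; apply/negP => sp; have E := minsetinf minF sp (subD1set F f).
by move: fF; rewrite -E in_setD1 eqxx.
Qed.

(* Every edge of a minimal spanning set is reached from the root: otherwise
   it could be dropped. *)
Lemma minimal_edges_reached (f : {set T}) : f \in F -> f \subset reach F.
Proof.
move=> fF; have /spanningP [edges conn] := spF.
apply/subsetPn => -[u uf]; rewrite inE => nu.
have unreached w : w \in f -> ~~ connect (adjF F) r w.
  move=> wf; case: (eqVneq w u) => [-> //|wu].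
  apply: contra nu => cw; apply: connect_trans cw (connect1 _).
  have [a [b [_ ef]]] := is_edgeP (edges _ fF).
  by rewrite /adjF wu /= (set2_pair (a:=a) (b:=b)) -?ef.
case/negP: (minimal_no_drop fF); apply/spanningP; split.
  by move=> f' /setD1P [_]; exact: edges.
by move=> s sS; apply: connect_drop_unreached => //; exact: conn.
Qed.

(* A minimal spanning set has no cycle: a cycle edge could be dropped. *)
Lemma minimal_acyclic : acyclic F.
Proof.
have /spanningP [edges conn] := spF.
move=> [[|c0 [|c1 rest]] [un sc cc]] //.
have fF : [set c0; c1] \in F by move: cc; rewrite /cycle /= => /andP [/andP [_ +] _].
case/negP: (minimal_no_drop fF); apply/spanningP; split.
  by move=> f' /setD1P [_]; exact: edges.
move=> s sS; apply: connect_drop_edge (conn _ sS).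
by rewrite connect_adjF_sym; apply: (cycle_bypass un _ cc).
Qed.

Lemma minimal_spanning_tree : is_Stree g S (reach F, F).
Proof.
have /spanningP [edges conn] := spF.
split=> /=; last by apply/subsetP => s sS; rewrite inE; exact: conn.
split=> //=.
- by move=> f fF; split; [exact: edges | exact: minimal_edges_reached].
- by apply/set0Pn; exists r; rewrite inE connect0.
- move=> u v; rewrite !inE => hu hv.
  by apply: connect_trans hv; rewrite connect_adjF_sym.
- exact: minimal_acyclic.
Qed.

End Minimal.

End SpanningTree.

Lemma trees_of_families (T : finType) (g : rel T) (S : {set T}) (r : T)
    (I : finType) (F : I -> {set {set T}}) :
  (forall i, spanning g S r (F i)) ->
  (forall i j, i != j -> [disjoint F i & F j]) -> has_trees g S #|I|.
Proof.
move=> sp disj; pose M i := s2val (minset_exists (sp i)).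
have minM i : minset (spanning g S r) (M i) := s2valP (minset_exists (sp i)).
have subM i : M i \subset F i := s2valP' (minset_exists (sp i)).
exists (fun k => (reach r (M (enum_val k)), M (enum_val k))); split.
  by move=> k; apply: minimal_spanning_tree.
move=> k1 k2 ne; apply: disjointWl (subM _) (disjointWr (subM _) (disj _ _ _)).
by apply: contra ne => /eqP /enum_val_inj ->.
Qed.

Ltac split_eqs :=
  repeat match goal with
  | H : is_true (_ || _) |- _ => case/orP: H => H
  | H : is_true (_ && _) |- _ => let H1 := fresh H in case/andP: H => H H1
  | H : is_true (_ == _) |- _ => move/eqP: H => H
  | H : is_true (~~ (_ == _)) |- _ => move/eqP: H => H
  | H : (_ == _) = false |- _ => move/negbT/eqP: H => H
  | H : (_ == _) = true |- _ => move/eqP: H => H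
  | H : @eq (prod _ _) (pair _ _) (pair _ _) |- _ => injection H as ? ?
  | H : (~~ (_ == _)) = false |- _ => move/negbFE/eqP: H => H
  | H : @eq (option _) (Some _) (Some _) |- _ => injection H as H
  end; subst; try congruence.

Section Construction.

Variables (T1 T2 : finType) (g : rel T1) (h : rel T2).
Hypotheses (gsym : symmetric g) (girr : irreflexive g).
Hypotheses (hsym : symmetric h) (hirr : irreflexive h).
Hypothesis cg : connected_graph g.

Variables x y z : T1 * T2.
Hypotheses (hxy : x.1 != y.1) (hyz : y.1 != z.1) (hxz : x.1 != z.1).

Variables s1 s2 s3 : T2.
Hypotheses (d12 : s1 != s2) (d13 : s1 != s3) (d23 : s2 != s3).
Hypotheses (x2S : x.2 \in [set s1; s2; s3]) (y2S : y.2 \in [set s1; s2; s3])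
  (z2S : z.2 \in [set s1; s2; s3]).

Variables (l1 l2 : nat) (trG : 'I_l1 -> {set T1} * {set {set T1}})
  (trH : 'I_l2 -> {set T2} * {set {set T2}}).
Hypotheses (trGS : forall i, is_Stree g [set x.1; y.1; z.1] (trG i))
  (trGd : forall i j, i != j -> [disjoint (trG i).2 & (trG j).2]).
Hypotheses (trHS : forall j, is_Stree h [set s1; s2; s3] (trH j))
  (trHd : forall i j, i != j -> [disjoint (trH i).2 & (trH j).2]).

Lemma g_neq (a b : T1) : g a b -> a != b.
Proof. by move=> gab; apply: contraTneq gab => ->; rewrite girr. Qed.

Definition label (a : T1) : option T2 :=
  if a == x.1 then Some x.2 else if a == y.1 then Some y.2
  else if a == z.1 then Some z.2 else None.

Lemma label_x : label x.1 = Some x.2. Proof. by rewrite /label eqxx. Qed.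
Lemma label_y : label y.1 = Some y.2.
Proof. by rewrite /label eq_sym (negbTE hxy) eqxx. Qed.
Lemma label_z : label z.1 = Some z.2.
Proof. by rewrite /label eq_sym (negbTE hxz) eq_sym (negbTE hyz) eqxx. Qed.

(* The copy of the G-vertex a in H-level w, moved to the terminal when the
   layer of a contains one; it maps x.1, y.1, z.1 to x, y, z. *)
Definition lift (w : T2) (a : T1) : T1 * T2 := (a, odflt w (label a)).

Lemma lift_terminal (w : T2) (v : T1 * T2) : v \in [set x; y; z] -> lift w v.1 = v.
Proof.
rewrite /lift !inE => /orP [/orP [] | ] /eqP ->;
  by rewrite ?label_x ?label_y ?label_z -surjective_pairing.
Qed.

(* A fixed orientation of the edges of G. *)
Definition before (a b : T1) : bool := enum_rank a < enum_rank b.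

Lemma before_total (a b : T1) : a != b -> before a b || before b a.
Proof.
move=> nab; rewrite /before -neq_ltn; apply: contra nab => /eqP e.
by apply/eqP; apply: enum_rank_inj; apply: val_inj.
Qed.

Definition cross_edge (a b : T1) (p : T2 * T2) : {set T1 * T2} :=
  [set (a, p.1); (b, p.2)].

Lemma cross_edge_mem (a b : T1) (p : T2 * T2) :
  (a, p.1) \in cross_edge a b p /\ (b, p.2) \in cross_edge a b p.
Proof. by rewrite /cross_edge set21 set22. Qed.

Lemma cross_edge_inj (a b a' b' : T1) (p p' : T2 * T2) :
  a != b -> before a b -> before a' b' ->
  cross_edge a b p = cross_edge a' b' p' -> [/\ a = a', b = b' & p = p'].
Proof.
case: p => s t; case: p' => s' t' /= nab r1 r2 E.
have : (a, s) \in cross_edge a' b' (s', t') by rewrite -E set21.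
have : (b, t) \in cross_edge a' b' (s', t') by rewrite -E set22.
move=> /set2P [] [? ?] /set2P [] [? ?]; subst.
- by rewrite eqxx in nab.
- by move: (ltn_trans r1 r2); rewrite ltnn.
- by [].
- by rewrite eqxx in nab.
Qed.

Lemma cross_edge_is_edge (a b : T1) (p : T2 * T2) :
  g a b -> is_edge (lexprod g h) (cross_edge a b p).
Proof.
move=> gab; apply/existsP; exists (a, p.1); apply/existsP; exists (b, p.2).
by rewrite /lexprod /= gab /cross_edge eqxx.
Qed.

Lemma adjF_cross_edge (F : {set {set T1 * T2}}) (a b : T1) (p : T2 * T2) :
  a != b -> cross_edge a b p \in F -> adjF F (a, p.1) (b, p.2).
Proof.
move=> nab hin; have ne : (a, p.1) != (b, p.2) by apply: contra nab => /eqP [-> _].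
by rewrite /adjF ne.
Qed.

(* The H-coordinates of the edges of a path of G o H from lift w a to
   lift w b: a single edge, unless both layers contain terminals and w is not
   the label of a, in which case a path of length three is used. *)
Definition lift_pairs (a b : T1) (w : T2) : seq (T2 * T2) :=
  match label a, label b with
  | Some va, Some vb =>
      if w == va then [:: (va, vb)] else
      let al := if w == vb then va else w in
      let be := if w == vb then vb else w in
      [:: (va, al); (be, al); (be, vb)]
  | sa, sb => [:: (odflt w sa, odflt w sb)]
  end.

Lemma lift_pairs_disjoint (a b : T1) (w w' : T2) (p : T2 * T2) :
  w != w' -> p \in lift_pairs a b w -> p \in lift_pairs a b w' -> False.
Proof.
rewrite /lift_pairs; case: (label a) => [va|]; case: (label b) => [vb|] /=;
  case: p => s t; rewrite ?inE /=;
  do ? case: ifP; rewrite ?inE /= ?xpair_eqE => *; split_eqs.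
Qed.

(* Every lifted pair starts at the label of a, ends at the label of b, has
   equal coordinates, or is the swap of the two labels; cross edges avoiding
   these four shapes are never lifted edges. *)
Lemma lift_pairs_shape (a b : T1) (w : T2) (p : T2 * T2) : p \in lift_pairs a b w ->
  [\/ label a = Some p.1, label b = Some p.2, p.1 = p.2 |
      label a = Some p.2 /\ label b = Some p.1].
Proof.
rewrite /lift_pairs; case: (label a) => [va|]; case: (label b) => [vb|] /=;
  case: p => s t; rewrite ?inE /=;
  do ? case: ifP; rewrite ?inE /= ?xpair_eqE => *; split_eqs;
  first [by constructor 1 | by constructor 2 | by constructor 3 | by constructor 4].
Qed.

Lemma lift_pairs_path (F : {set {set T1 * T2}}) (a b : T1) (w : T2) :
  a != b -> (forall p, p \in lift_pairs a b w -> cross_edge a b p \in F) ->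
  connect (adjF F) (lift w a) (lift w b).
Proof.
move=> nab inF.
have step p : p \in lift_pairs a b w -> adjF F (a, p.1) (b, p.2).
  by move=> hp; apply: adjF_cross_edge => //; apply: inF.
have back p : p \in lift_pairs a b w -> adjF F (b, p.2) (a, p.1).
  by move=> hp; rewrite adjF_sym; apply: step.
move: step back; rewrite /lift /lift_pairs.
case: (label a) => [va|]; case: (label b) => [vb|] /= step back;
  try exact: connect1 (step _ (mem_head _ _)).
case: ifP => [/eqP ew|nw] in step back *.
  exact: connect1 (step _ (mem_head _ _)).
apply: connect_trans (connect1 (step _ (mem_head _ _))) _.
apply: connect_trans (connect1 (back _ (mem_nth (va, va) (s := [:: _; _; _]) (n := 1) isT))) _.
exact: connect1 (step _ (mem_nth (va, va) (s := [:: _; _; _]) (n := 2) isT)).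
Qed.

Definition lifted_tree (i : 'I_l1) (w : T2) : {set {set T1 * T2}} :=
  [set E | [exists a, exists b, exists p,
     [&& g a b, [set a; b] \in (trG i).2, before a b, p \in lift_pairs a b w
       & E == cross_edge a b p]]].

Lemma lifted_treeP (i : 'I_l1) (w : T2) (E : {set T1 * T2}) :
  E \in lifted_tree i w -> exists a b p,
  [/\ g a b, [set a; b] \in (trG i).2, before a b, p \in lift_pairs a b w
    & E = cross_edge a b p].
Proof.
rewrite inE => /existsP [a /existsP [b /existsP [p /and5P [h1 h2 h3 h4 /eqP h5]]]].
by exists a, b, p.
Qed.

Lemma lifted_tree_edge (i : 'I_l1) (w : T2) (a b : T1) (p : T2 * T2) :
  g a b -> [set a; b] \in (trG i).2 -> before a b ->
  p \in lift_pairs a b w -> cross_edge a b p \in lifted_tree i w.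
Proof.
move=> h1 h2 h3 h4; rewrite inE; apply/existsP; exists a; apply/existsP; exists b.
by apply/existsP; exists p; rewrite h1 h2 h3 h4 eqxx.
Qed.

Lemma lifted_tree_connect (i : 'I_l1) (w : T2) (a b : T1) :
  adjF (trG i).2 a b -> connect (adjF (lifted_tree i w)) (lift w a) (lift w b).
Proof.
move=> /andP [nab hin]; have [[sub _ _ _] _] := trGS i.
have gab : g a b by apply: edge_rel => //; case: (sub _ hin).
case/orP: (before_total nab) => r.
  by apply: lift_pairs_path => // p hp; apply: lifted_tree_edge.
rewrite connect_adjF_sym; apply: lift_pairs_path; first by rewrite eq_sym.
by move=> p hp; apply: lifted_tree_edge; rewrite // 1?gsym // setUC.
Qed.

(* The lifted tree connects x to the other terminals, as T_i connects
   their layers. *)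
Lemma lifted_tree_spanning (i : 'I_l1) (w : T2) :
  spanning (lexprod g h) [set x; y; z] x (lifted_tree i w).
Proof.
apply/spanningP; split.
  by move=> E /lifted_treeP [a [b [p [gab _ _ _ ->]]]]; apply: cross_edge_is_edge.
have [[_ _ conn _] SW] := trGS i.
move=> v hv; rewrite -(lift_terminal w hv) -(lift_terminal w (_ : x \in _));
  last by rewrite !inE eqxx.
apply: (connect_map (@lifted_tree_connect i w)); apply: conn; apply: (subsetP SW).
  by rewrite !inE eqxx.
by move: hv; rewrite !inE => /orP [/orP [] | ] /eqP ->; rewrite eqxx ?orbT.
Qed.

(* Lifts of distinct trees share no edge since the trees are edge-disjoint;
   lifts of a tree to distinct levels use disjoint lift_pairs. *)
Lemma lifted_trees_disjoint (i i' : 'I_l1) (w w' : T2) :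
  (i, w) != (i', w') -> [disjoint lifted_tree i w & lifted_tree i' w'].
Proof.
move=> ne; apply: disjoint_setsP => E /lifted_treeP [a [b [p [gab hin r hp ->]]]]
  /lifted_treeP [a' [b' [p' [_ hin' r' hp' E']]]].
have [ea eb ep] := cross_edge_inj (g_neq gab) r r' E'; subst a' b' p'.
case: (eqVneq i i') => [ei|nei].
  subst i'; apply: (lift_pairs_disjoint (w := w) (w' := w')) hp hp'.
  by apply: contra ne => /eqP ->.
by move: hin'; rewrite (disjointFr (trGd nei) hin).
Qed.

Lemma three_not_covered (e1 e2 : option T2) :
  ~~ [&& Some s1 \in [:: e1; e2], Some s2 \in [:: e1; e2] & Some s3 \in [:: e1; e2]].
Proof.
move: d12 d13 d23 => /eqP ? /eqP ? /eqP ?.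
rewrite !inE; apply/negP => H; split_eqs.
Qed.

Definition pick3 (P : pred T2) : T2 := if P s1 then s1 else if P s2 then s2 else s3.

Lemma pick3P (P : pred T2) (e1 e2 : option T2) :
  (forall s, ~~ P s -> Some s \in [:: e1; e2]) ->
  P (pick3 P) /\ pick3 P \in [set s1; s2; s3].
Proof.
move=> H; rewrite /pick3; case: ifP => [-> | /negbT H1]; first by rewrite !inE eqxx.
case: ifP => [-> | /negbT H2]; first by rewrite !inE eqxx orbT.
split; last by rewrite !inE eqxx !orbT.
apply: contraR (three_not_covered e1 e2) => H3.
by rewrite (H _ H1) (H _ H2) (H _ H3).
Qed.

Definition free_label (a b : T1) : T2 :=
  pick3 (fun s => (Some s != label a) && (Some s != label b)).

Lemma free_labelP (a b : T1) :
  [/\ Some (free_label a b) != label a, Some (free_label a b) != label b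
    & free_label a b \in [set s1; s2; s3]].
Proof.
have [] := @pick3P (fun s => (Some s != label a) && (Some s != label b)) (label a) (label b).
  by move=> s; rewrite negb_and !negbK !inE.
by move=> /andP [H1 H2] H3; split.
Qed.

Definition other_label (a b : T1) : T2 :=
  pick3 (fun s => (s != free_label a b) && (Some s != label a)).

Lemma other_labelP (a b : T1) :
  [/\ other_label a b != free_label a b, Some (other_label a b) != label a
    & other_label a b \in [set s1; s2; s3]].
Proof.
have [] := @pick3P (fun s => (s != free_label a b) && (Some s != label a))
  (Some (free_label a b)) (label a).
  by move=> s; rewrite negb_and !negbK !inE.
by move=> /andP [H1 H2] H3; split.
Qed.

Definition tree_next (j : 'I_l2) (s : T2) : T2 :=
  odflt s [pick t | [set s; t] \in (trH j).2].

(* Each of s1, s2, s3 has a neighbour in R_j, since R_j connects it to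
   another of them. *)
Lemma tree_nextP (j : 'I_l2) (s : T2) : s \in [set s1; s2; s3] ->
  [/\ [set s; tree_next j s] \in (trH j).2, tree_next j s != s
    & tree_next j s \in (trH j).1].
Proof.
move=> sS; have [[sub _ conn _] SW] := trHS j.
have [s' s'S ns] : exists2 s', s' \in [set s1; s2; s3] & s' != s.
  case: (eqVneq s s1) => [->|ne]; [exists s2 | exists s1];
    by rewrite ?inE ?eqxx ?orbT // eq_sym.
have := conn s s' (subsetP SW _ sS) (subsetP SW _ s'S) => /connectP [[|t p] hp ep].
  by move: ns; rewrite ep eqxx.
move: hp => /= /andP [/andP [nst hst] _].
have hnext : [set s; tree_next j s] \in (trH j).2.
  by rewrite /tree_next; case: pickP => [t' -> //|/(_ t)]; rewrite hst.
have [ie fs] := sub _ hnext.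
split => //; first by rewrite eq_sym; apply: edge_neq ie.
by apply: (subsetP fs); rewrite set22.
Qed.

(* Edge-disjointness of the H-trees makes the neighbour identify the tree. *)
Lemma tree_next_inj (j j' : 'I_l2) (s : T2) : s \in [set s1; s2; s3] ->
  tree_next j s = tree_next j' s -> j = j'.
Proof.
move=> sS e; apply/eqP; apply: contraT => ne.
have [h1 _ _] := tree_nextP j sS; have [h2 _ _] := tree_nextP j' sS.
by move: h2; rewrite -e (disjointFr (trHd ne) h1).
Qed.

(* The H-coordinates of the edge joining layers a and b in the j-th
   H-family: both ends lie in the j-th H-tree, and the pair avoids the four
   shapes of lifted pairs. *)
Definition link (a b : T1) (j : 'I_l2) : T2 * T2 :=
  let s := free_label a b in let n := tree_next j s in
  if Some n != label b then (s, n)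
  else if Some n != label a then (n, s) else (other_label a b, s).

Lemma linkP (a b : T1) (j : 'I_l2) : let c := link a b j in
  [/\ Some c.1 != label a, Some c.2 != label b, c.1 != c.2,
      ~~ ((label a == Some c.2) && (label b == Some c.1)) &
      (c.1 \in (trH j).1) && (c.2 \in (trH j).1)].
Proof.
have [_ SW] := trHS j.
have [sa sb sS] := free_labelP a b; have [ta ts tS] := other_labelP a b.
have [_ nn nW] := tree_nextP j sS.
have sW := subsetP SW _ sS; have tW := subsetP SW _ tS.
rewrite /link /=; case: ifP => [n1|/negbFE n1]; rewrite /= ?nW ?sW ?tW //.
  by split => //; rewrite 1?eq_sym // negb_and (eq_sym (label b)) sb orbT.
case: ifP => [n2|/negbFE n2] /=; split => //; rewrite ?(eq_sym (label a)) ?sa ?n2 //.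
all: by rewrite ?nW ?sW ?tW ?(negbTE sa).
Qed.

Lemma link_inj (a b : T1) (j j' : 'I_l2) : link a b j = link a b j' -> j = j'.
Proof.
have [sa sb sS] := free_labelP a b; have [ta ts tS] := other_labelP a b.
have [_ nn _] := tree_nextP j sS; have [_ nn' _] := tree_nextP j' sS.
move=> e; apply: (tree_next_inj sS); move: e.
rewrite /link; repeat (case: ifP => ?); move=> *; split_eqs.
Qed.

Definition layer_copies (j : 'I_l2) : {set {set T1 * T2}} :=
  [set E | [exists a, exists c, exists d,
     [&& h c d, [set c; d] \in (trH j).2 & E == [set (a, c); (a, d)]]]].
Definition links (j : 'I_l2) : {set {set T1 * T2}} :=
  [set E | [exists a, exists b, [&& g a b, before a b & E == cross_edge a b (link a b j)]]].
Definition tree_family (j : 'I_l2) : {set {set T1 * T2}} := layer_copies j :|: links j.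

Lemma layer_copiesP (j : 'I_l2) (E : {set T1 * T2}) : E \in layer_copies j ->
  exists a c d, [/\ h c d, [set c; d] \in (trH j).2 & E = [set (a, c); (a, d)]].
Proof.
rewrite inE => /existsP [a /existsP [c /existsP [d /and3P [h1 h2 /eqP h3]]]].
by exists a, c, d.
Qed.

Lemma linksP (j : 'I_l2) (E : {set T1 * T2}) : E \in links j ->
  exists a b, [/\ g a b, before a b & E = cross_edge a b (link a b j)].
Proof.
rewrite inE => /existsP [a /existsP [b /and3P [h1 h2 /eqP h3]]].
by exists a, b.
Qed.

Lemma tree_family_layer (j : 'I_l2) (a : T1) (s t : T2) :
  s \in (trH j).1 -> t \in (trH j).1 ->
  connect (adjF (tree_family j)) (a, s) (a, t).
Proof.
have [[sub _ conn _] _] := trHS j.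
move=> hs ht; apply: (connect_map (f := fun c => (a, c))) (conn _ _ hs ht).
move=> c d /andP [ncd hin]; apply: connect1.
have hcd : h c d by apply: edge_rel => //; case: (sub _ hin).
rewrite /adjF /= xpair_eqE eqxx ncd /= inE; apply/orP; left; rewrite inE.
apply/existsP; exists a; apply/existsP; exists c; apply/existsP; exists d.
by rewrite hcd hin eqxx.
Qed.

Lemma tree_family_link (j : 'I_l2) (a b : T1) : g a b -> exists s t,
  [/\ s \in (trH j).1, t \in (trH j).1 & connect (adjF (tree_family j)) (a, s) (b, t)].
Proof.
wlog r : a b / before a b => [WL gab|gab].
  case/orP: (before_total (g_neq gab)) => r; first exact: WL.
  have [s [t [hs ht c]]] : exists s t, [/\ s \in (trH j).1, t \in (trH j).1
    & connect (adjF (tree_family j)) (b, s) (a, t)] by apply: WL; rewrite // gsym.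
  by exists t, s; split => //; rewrite connect_adjF_sym.
have [_ _ _ _ /andP [m1 m2]] := linkP a b j.
exists (link a b j).1, (link a b j).2; split => //; apply: connect1.
apply: adjF_cross_edge (g_neq gab) _.
by rewrite inE; apply/orP; right; rewrite inE; apply/existsP; exists a;
  apply/existsP; exists b; rewrite gab r eqxx.
Qed.

Lemma tree_family_spanning (j : 'I_l2) :
  spanning (lexprod g h) [set x; y; z] x (tree_family j).
Proof.
have [_ SW] := trHS j.
apply/spanningP; split.
  move=> E; rewrite inE => /orP [/layer_copiesP [a [c [d [hcd _ ->]]]] | /linksP [a [b [gab _ ->]]]].
    apply/existsP; exists (a, c); apply/existsP; exists (a, d).
    by rewrite /lexprod /= !eqxx hcd orbT.
  exact: cross_edge_is_edge.
(* Walk along a G-path from the layer of x, reaching the whole copy of the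
   j-th H-tree in every layer visited. *)
have along p c : (forall s, s \in (trH j).1 -> connect (adjF (tree_family j)) x (c, s)) ->
    path g c p -> forall s, s \in (trH j).1 -> connect (adjF (tree_family j)) x (last c p, s).
  elim: p c => [|d p IHp] c hc //= /andP [gcd hp]; apply: IHp hp => s hs.
  have [s0 [t0 [hs0 ht0 cc]]] := tree_family_link j gcd.
  apply: connect_trans (hc _ hs0) _; apply: connect_trans cc _.
  exact: tree_family_layer.
move=> v hv; have /connectP [p hp e] := cg x.1 v.1.
rewrite [v]surjective_pairing e; apply: along hp _ _; last first.
  apply: (subsetP SW); move: hv x2S y2S z2S.
  by rewrite !inE => /orP [/orP [] | ] /eqP ->.
move=> s hs; rewrite {1}[x]surjective_pairing; apply: tree_family_layer => //.
exact: (subsetP SW).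
Qed.

Lemma layer_edge_inj (a a' : T1) (c d c' d' : T2) :
  [set (a, c); (a, d)] = [set (a', c'); (a', d')] -> [set c; d] = [set c'; d'].
Proof.
move=> E; have ea : a = a'.
  have : (a, c) \in [set (a', c'); (a', d')] by rewrite -E set21.
  by case/set2P => [[-> _]|[-> _]].
subst a'; apply/setP => u.
by move: (congr1 (fun S : {set T1 * T2} => (a, u) \in S) E); rewrite !inE !xpair_eqE !eqxx.
Qed.

Lemma layer_edge_neq_cross (a a' b' : T1) (c d : T2) (p : T2 * T2) :
  a' != b' -> [set (a, c); (a, d)] <> cross_edge a' b' p.
Proof.
move=> nab E; have [m1 m2] := cross_edge_mem a' b' p; rewrite -E in m1 m2.
by move: m1 m2 => /set2P [] [e1 _] /set2P [] [e2 _]; subst; rewrite eqxx in nab.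
Qed.

(* Distinct H-families share no edge: the H-trees are edge-disjoint and the
   linking pairs differ. *)
Lemma tree_families_disjoint (j j' : 'I_l2) :
  j != j' -> [disjoint tree_family j & tree_family j'].
Proof.
move=> ne; apply: disjoint_setsP => E; rewrite !in_setU.
move=> /orP [/layer_copiesP [a [c [d [_ hin ->]]]] | /linksP [a [b [gab r ->]]]]
  /orP [/layer_copiesP [a' [c' [d' [_ hin' E']]]] | /linksP [a' [b' [gab' r' E']]]].
- rewrite -(layer_edge_inj E') in hin'.
  by move: hin'; rewrite (disjointFr (trHd ne) hin).
- exact: layer_edge_neq_cross (g_neq gab') E'.
- exact: layer_edge_neq_cross (g_neq gab) (esym E').
- have [ea eb ep] := cross_edge_inj (g_neq gab) r r' E'; subst a' b'.
  by move/eqP: ne; apply; apply: link_inj ep.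
Qed.

(* No H-family edge is a lifted edge: layer edges are not cross edges, and
   links avoid the shapes of lifted pairs. *)
Lemma tree_family_lifted_tree_disjoint (j : 'I_l2) (i : 'I_l1) (w : T2) :
  [disjoint tree_family j & lifted_tree i w].
Proof.
apply: disjoint_setsP => E; rewrite in_setU.
move=> /orP [/layer_copiesP [a [c [d [_ hin ->]]]] | /linksP [a [b [gab r ->]]]]
  /lifted_treeP [a' [b' [p' [gab' hin' r' hp' E']]]].
  exact: layer_edge_neq_cross (g_neq gab') E'.
have [ea eb ep] := cross_edge_inj (g_neq gab) r r' E'; subst a' b' p'.
have [h1 h2 h3 h4 _] := linkP a b j.
case: (lift_pairs_shape hp') => [e|e|e|[e e']].
- by rewrite e eqxx in h1.
- by rewrite e eqxx in h2.
- by rewrite e eqxx in h3.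
- by rewrite e e' !eqxx in h4.
Qed.

Definition family (k : 'I_l2 + 'I_l1 * T2) : {set {set T1 * T2}} :=
  match k with inl j => tree_family j | inr iw => lifted_tree iw.1 iw.2 end.

Lemma family_spanning (k : 'I_l2 + 'I_l1 * T2) :
  spanning (lexprod g h) [set x; y; z] x (family k).
Proof.
by case: k => [j | [i w]]; [exact: tree_family_spanning | exact: lifted_tree_spanning].
Qed.

Lemma families_disjoint (k k' : 'I_l2 + 'I_l1 * T2) :
  k != k' -> [disjoint family k & family k'].
Proof.
case: k => [j | [i w]]; case: k' => [j' | [i' w']] /= ne.
- by apply: tree_families_disjoint; apply: contra ne => /eqP ->.
- exact: tree_family_lifted_tree_disjoint.
- by rewrite disjoint_sym; apply: tree_family_lifted_tree_disjoint.
- by apply: lifted_trees_disjoint; apply: contra ne => /eqP ->.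
Qed.

End Construction.

Lemma card3 (T : finType) (a b c : T) : a != b -> a != c -> b != c ->
  #|[set a; b; c]| = 3.
Proof.
move=> ab ac bc; rewrite setUC cardsU1 cards2 !inE ab /=.
by rewrite eq_sym (negbTE ac) eq_sym (negbTE bc).
Qed.

Lemma extend_to_card3 (T : finType) (A : {set T}) :
  #|A| <= 3 -> 3 <= #|T| -> exists2 B : {set T}, A \subset B & #|B| = 3.
Proof.
move=> hA hT; move: {2}(3 - #|A|) (erefl (3 - #|A|)) => n.
elim: n A hA => [|n IHn] A hA hn; first by exists A => //; lia.
have [t tA] : exists t, t \notin A.
  apply/existsP; rewrite -negb_forall; apply: contraTN isT => /forallP all_in.
  have : #|T| <= #|A| by apply: subset_leq_card; apply/subsetP => t _; exact: all_in.
  by lia.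
have [||B sB cB] := IHn (t |: A); try by rewrite cardsU1 tA /=; lia.
by exists B => //; apply: subset_trans sB; apply: subsetUr.
Qed.

Lemma three_cover (T : finType) (v1 v2 v3 : T) : 3 <= #|T| ->
  exists s1 s2 s3 : T, [/\ s1 != s2, s1 != s3, s2 != s3 &
    [/\ v1 \in [set s1; s2; s3], v2 \in [set s1; s2; s3] & v3 \in [set s1; s2; s3]]].
Proof.
move=> hT; have hA : #|[set v1; v2; v3]| <= 3.
  by rewrite setUC cardsU1 cards2; case: (_ \notin _); case: (_ != _).
have [B sB cB] := extend_to_card3 hA hT.
have hu := enum_uniq (mem B); have hs : size (enum B) = 3 by rewrite -cardE.
have hm v : v \in [set v1; v2; v3] -> v \in enum B.
  by move=> hv; rewrite mem_enum; apply: (subsetP sB).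
case: (enum B) hs hu hm => [|s1 [|s2 [|s3 [|]]]] // _ hu hm.
move: hu; rewrite /= !inE negb_or => /andP [/andP [n12 n13] /andP [n23 _]].
exists s1, s2, s3; split => //; split.
all: [> move: (hm v1) | move: (hm v2) | move: (hm v3)].
all: by rewrite !inE eqxx ?orbT /= ?orbA => ->.
Qed.

Unset Implicit Arguments.

Theorem lemma3p3 (T1 T2 : finType) (g : rel T1) (h : rel T2)
  (sg : simple_graph g) (sh : simple_graph h)
  (cg : connected_graph g) (ch : connected_graph h)
  (n1 : 3 <= #|T1|) (n2 : 3 <= #|T2|)
  (l1 l2 : nat) (hl1 : is_lambda3 g l1) (hl2 : is_lambda3 h l2)
  (x y z : T1 * T2)
  (hxy : x.1 != y.1) (hyz : y.1 != z.1) (hxz : x.1 != z.1) :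
  has_trees (lexprod g h) [set x; y; z] (l2 + l1 * #|T2|).
Proof.
case: sg => gsym girr; case: sh => hsym hirr.
have [s1 [s2 [s3 [d12 d13 d23 [x2S y2S z2S]]]]] := three_cover x.2 y.2 z.2 n2.
have [/(_ [set x.1; y.1; z.1] (card3 hxy hxz hyz)) [trG [trGS trGd]] _] := hl1.
have [/(_ [set s1; s2; s3] (card3 d12 d13 d23)) [trH [trHS trHd]] _] := hl2.
have -> : l2 + l1 * #|T2| = #|{: 'I_l2 + 'I_l1 * T2}|.
  by rewrite card_sum card_prod !card_ord.
apply: trees_of_families.
- exact: (family_spanning gsym girr hsym hirr cg hxy hyz hxz d12 d13 d23
    x2S y2S z2S trGS trHS).
- exact: (families_disjoint girr hirr x y z d12 d13 d23 trGd trHS trHd).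
Qed.
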